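(* Let $K$ be a positive integer, $\Delta x=2\pi/K$, and consider vectors $u=(u_1,\dots,u_K)^\top$ extended periodically by $u_{k+K}=u_k$. Let $\bar g_k,\bar f_k:\mathbb{R}^K\to\mathbb{R}$ ($k\in\mathbb{Z}$, with $\bar g_{k+K}=\bar g_k$, $\bar f_{k+K}=\bar f_k$) be differentiable maps. Suppose the initial value $u(0)$ satisfies $\sum_{k=1}^K\bar f_k(u(0))=0$. Let $u:[0,T)\to\mathbb{R}^K$ be a solution of the initial value problem for the average-difference method $$\delta_x^+\big(\dot u_k+\bar g_k(u)\big)=\mu_x^+\bar f_k(u)\qquad(k=1,\dots,K)$$ satisfying $\sum_{j=1}^K\sum_{k=1}^K\frac{\partial\bar f_j}{\partial u_k}(u(t))\neq0$ for all $t\in(0,T)$. Then $u$ is also a solution of $$\dot u_k+\bar g_k(u)=\delta^{-1}_{\mathrm{FD}}\bar f_k(u)+\mathcal{C}_{\mathrm d}(u)\qquad(k=1,\dots,K),$$ where $$\mathcal{C}_{\mathrm d}(u)=\frac{\sum_{j=1}^K\sum_{k=1}^K\frac{\partial\bar f_j}{\partial u_k}(u)\big(\bar g_k(u)-\delta^{-1}_{\mathrm{FD}}\bar f_k(u)\big)}{\sum_{j=1}^K\sum_{k=1}^K\frac{\partial\bar f_j}{\partial u_k}(u)}.$$ Conversely, a solution $u$ of the initial value problem for the latter equation satisfies the average-difference method equation.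
   Context: Here $\dot u_k=\mathrm{d}u_k/\mathrm{d}t$. The forward difference and forward average operators are $\delta_x^+w_k=(w_{k+1}-w_k)/\Delta x$ and $\mu_x^+w_k=(w_k+w_{k+1})/2$ (indices taken periodically). For a periodic sequence $w$ (so $w_0=w_K$), the discrete operator $\delta^{-1}_{\mathrm{FD}}$ is $$\delta^{-1}_{\mathrm{FD}}w_k=\Big(\frac{w_0}{2}+\sum_{i=1}^{k-1}w_i+\frac{w_k}{2}\Big)\Delta x-\frac{1}{2\pi}\sum_{i=1}^K\Big(\frac{w_0}{2}+\sum_{j=1}^{i-1}w_j+\frac{w_i}{2}\Big)(\Delta x)^2,$$ and $\delta^{-1}_{\mathrm{FD}}\bar f_k(u)$ means $\delta^{-1}_{\mathrm{FD}}$ applied to the sequence $(\bar f_k(u))_k$ and evaluated at index $k$. *)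

From HB Require Import structures.
From mathcomp Require Import all_boot all_order all_algebra.
From mathcomp Require Import all_classical all_reals all_analysis.
Set Implicit Arguments. Unset Strict Implicit. Unset Printing Implicit Defensive.
Import Order.TTheory GRing.Theory Num.Theory.
Import numFieldNormedType.Exports.
Local Open Scope ring_scope.

Section Defs.
Variable R : realType.

(* Convention: an element of R^K is a row vector x : 'rV[R]_K, and the paper's
   index k in {1,...,K} corresponds to the ordinal (k-1 : 'I_K).
   A K-periodic sequence (w_k)_{k in Z} is given by w : 'I_K -> R. *)

(* periodic extension to nat indices: [per w k] = w_k, with w_{k+K} = w_k
   (index k is stored at ordinal (k-1) mod K; e.g. w_0 = w_K). *)
Definition per (K : nat) (w : 'I_K -> R) (k : nat) : R :=
  \sum_(j < K | (j : nat) == ((k + K).-1 %% K)%N) w j.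

Definition dx (K : nat) : R := 2 * pi / K%:R.

Definition fdiff (K : nat) (w : 'I_K -> R) (k : nat) : R :=
  (per w k.+1 - per w k) / dx K.

Definition favg (K : nat) (w : 'I_K -> R) (k : nat) : R :=
  (per w k + per w k.+1) / 2.

Definition trap (K : nat) (w : 'I_K -> R) (k : nat) : R :=
  per w 0 / 2 + \sum_(1 <= i < k) per w i + per w k / 2.

Definition dinvFD (K : nat) (w : 'I_K -> R) (k : nat) : R :=
  trap w k * dx K
  - (2 * pi)^-1 * \sum_(1 <= i < K.+1) trap w i * dx K ^+ 2.

Definition pderiv (K : nat) (f : 'rV[R]_K -> R) (k : 'I_K) (x : 'rV[R]_K) : R :=
  'D_(delta_mx 0 k) f x.

Definition Cd (K : nat) (f g : 'I_K -> 'rV[R]_K -> R) (x : 'rV[R]_K) : R :=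
  (\sum_(j < K) \sum_(k < K)
      pderiv (f j) k x * (g k x - dinvFD (fun i => f i x) k.+1))
  / (\sum_(j < K) \sum_(k < K) pderiv (f j) k x).

End Defs.

From HB Require Import structures.
From mathcomp Require Import all_boot all_order all_algebra.
From mathcomp Require Import all_classical all_reals all_analysis.
From mathcomp Require Import ring lra zify.
Import Order.TTheory GRing.Theory Num.Theory.
Import numFieldNormedType.Exports.
Local Open Scope classical_set_scope.
Local Open Scope ring_scope.

(* At a fixed time, the identity delta_x^+ (delta^{-1}_FD w)_k = mu_x^+ w_k,
   together with the fact that delta^{-1}_FD w gains Delta x * sum_k w_k over
   one period, shows that the average-difference equation holds iff
   sum_k f_k(u) = 0 and u'_k + g_k(u) - delta^{-1}_FD f_k(u) = c(t) does not
   depend on k.  Along such a u the chain rule gives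
     d/dt sum_j f_j(u) = (c - C_d(u)) * sum_{j,k} df_j/du_k (u),
   so, the Jacobian sum being nonzero, the constraint sum_j f_j(u) = 0 forces
   c = C_d(u); conversely c = C_d(u) makes sum_j f_j(u) constant, hence equal
   to its initial value 0. *)

Section DiscreteInverse.
Context {R : realType} {K : nat}.

Lemma per_ord (w : 'I_K -> R) (k : 'I_K) : per w k.+1 = w k.
Proof.
rewrite /per addSn /= modnDr modn_small //.
by rewrite (eq_bigl (pred1 k)) ?big_pred1_eq.
Qed.

Lemma per_wrap (w : 'I_K -> R) : per w K.+1 = per w 1.
Proof. by rewrite /per addSn /= add0n modnDl modnn. Qed.

Lemma dinvFD_succ (F : 'I_K -> R) n : (0 < n)%N ->
  dinvFD F n.+1 - dinvFD F n = favg F n * dx R K.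
Proof.
move=> n_gt0; rewrite /dinvFD /trap /favg big_nat_recr //=.
by set C := (2 * pi)^-1 * _; field.
Qed.

Lemma dinvFD_wrap (F : 'I_K -> R) :
  dinvFD F K.+1 - dinvFD F 1 = (\sum_(k < K) F k) * dx R K.
Proof.
have -> : \sum_(k < K) F k = \sum_(1 <= i < K.+1) per F i.
  by rewrite big_add1 big_mkord; apply: eq_bigr => k _; rewrite per_ord.
rewrite /dinvFD /trap per_wrap (@big_geq _ _ _ 1 1) //.
by set C := (2 * pi)^-1 * _; ring.
Qed.

Hypothesis K_gt0 : (0 < K)%N.

Lemma dx_gt0 : 0 < dx R K.
Proof. by rewrite divr_gt0 ?mulr_gt0 ?pi_gt0 ?ltr0n. Qed.

Lemma fdiff_favgE (w F : 'I_K -> R) {n} : (0 < n)%N ->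
  fdiff w n = favg F n <->
  per w n.+1 - dinvFD F n.+1 = per w n - dinvFD F n.
Proof.
move=> n_gt0; have dx_neq0 := lt0r_neq0 dx_gt0.
have := dinvFD_succ F _ n_gt0; rewrite /fdiff => succ.
split=> E; first by move: succ; rewrite -E divfK //; lra.
by apply: (mulIf dx_neq0); rewrite divfK //; lra.
Qed.

Lemma fdiff_favg_dinvFDP (w F : 'I_K -> R) :
  (forall k : 'I_K, fdiff w k.+1 = favg F k.+1) <->
  \sum_(k < K) F k = 0 /\ exists c, forall k : 'I_K, w k = dinvFD F k.+1 + c.
Proof.
pose e n := per w n - dinvFD F n.
split=> [fdiff_eq | [F_sum0 [c w_eq]] k].
  have e_const n : (0 < n <= K.+1)%N -> e n = e 1.
    elim: n => [// | [// | n] IH] /andP[_ nK].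
    have -> : e n.+2 = e n.+1.
      exact: (fdiff_favgE w F (ltn0Sn n)).1 (fdiff_eq (Ordinal (nK : (n < K)%N))).
    exact/IH/ltnW.
  split; last first.
    exists (e 1) => k; rewrite -(e_const k.+1) /e ?per_ord ?subrKC //=.
    exact: ltnW (ltn_ord k).
  have := e_const K.+1 (leqnn _); rewrite /e per_wrap => /addrI/oppr_inj.
  move/eqP; rewrite -subr_eq0 dinvFD_wrap mulf_eq0 (gt_eqF dx_gt0) orbF.
  by move/eqP.
have per_eq n : (0 < n <= K.+1)%N -> per w n = dinvFD F n + c.
  case: n => [// | n] /= nK; case: (ltnP n K) => [n_ltK | n_geK].
    by rewrite (per_ord w (Ordinal n_ltK)) w_eq.
  have -> : n = K by lia.
  rewrite per_wrap (per_ord w (Ordinal K_gt0)) w_eq.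
  by have /eqP := dinvFD_wrap F; rewrite F_sum0 mul0r subr_eq0 => /eqP ->.
apply/fdiff_favgE => //; rewrite !per_eq ?(addrC _ c) ?addrK //.
  exact: ltnW (ltn_ord k).
exact: ltn_ord k.
Qed.

End DiscreteInverse.

Lemma double_sum_shift {R : comPzRingType} {I J : finType} {p : I -> J -> R}
    {d g D : J -> R} {c : R} :
  (forall k, d k + g k = D k + c) ->
  \sum_i \sum_k p i k * d k
  = c * \sum_i \sum_k p i k - \sum_i \sum_k p i k * (g k - D k).
Proof.
move=> dE; rewrite mulr_sumr -sumrB; apply: eq_bigr => i _.
rewrite mulr_sumr -sumrB; apply: eq_bigr => k _.
by rewrite -[d k](addrK (g k)) dE; ring.
Qed.

Section ChainRule.
Context {R : realType} {K : nat}.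

Lemma is_derive_comp_pderiv (f : 'rV[R]_K -> R) (u : R -> 'rV[R]_K) t :
  differentiable f (u t) -> derivable u t 1 ->
  is_derive t 1 (f \o u) (\sum_(k < K) pderiv f k (u t) * ('D_1 u t) 0 k).
Proof.
move=> df du; have dut : differentiable u t by apply/derivable1_diffP.
have dfu : differentiable (f \o u) t by exact: differentiable_comp.
apply: DeriveDef; first exact/derivable1_diffP.
rewrite deriveE // diff_comp //= -[('d u t) 1]deriveE //.
rewrite {1}(row_sum_delta ('D_1 u t)) linear_sum; apply: eq_bigr => k _.
by rewrite linearZ /= /pderiv [in RHS]deriveE // mulrC.
Qed.

Lemma is_derive_sum_comp_pderiv (f : 'I_K -> 'rV[R]_K -> R) (u : R -> 'rV[R]_K) t :
  (forall j, differentiable (f j) (u t)) -> derivable u t 1 ->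
  is_derive t 1 (fun s => \sum_j f j (u s))
    (\sum_j \sum_k pderiv (f j) k (u t) * ('D_1 u t) 0 k).
Proof.
move=> df du; rewrite -[X in is_derive _ _ X _]fct_sumE.
by apply: is_derive_sum => j; exact: is_derive_comp_pderiv.
Qed.

End ChainRule.

Section Interval.
Context {R : realType} (T : \bar R).

Lemma near_pos_lt_ereal {t : R} : 0 < t -> (t%:E < T)%E ->
  \forall s \near t, 0 < s /\ (s%:E < T)%E.
Proof.
case: T => [r | | //] t_gt0 tT.
- rewrite lte_fin in tT; near=> s; split; last rewrite lte_fin.
    by near: s; exact: lt_nbhsr.
  by near: s; exact: lt_nbhsl.
- near=> s; split; last exact: ltry.
  by near: s; exact: lt_nbhsr.
Unshelve. all: by end_near.
Qed.

Lemma is_derive0_right_cst (h : R -> R) :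
  (forall s, 0 < s -> (s%:E < T)%E -> is_derive s 1 h 0) ->
  h x @[x --> 0^'+] --> h 0 ->
  forall t, 0 < t -> (t%:E < T)%E -> h t = h 0.
Proof.
move=> dh h_cvg0 t t_gt0 tT.
have inT s : s < t -> (s%:E < T)%E by move=> st; rewrite (lt_trans _ tT) ?lte_fin.
have h_cont s : 0 < s -> (s%:E < T)%E -> {for s, continuous h}.
  move=> s_gt0 sT; apply/differentiable_continuous/derivable1_diffP.
  by have [] := dh s s_gt0 sT.
have [x _] : exists2 x, x \in `]0, t[ & h t - h 0 = 0 * (t - 0).
  apply: MVT => // [x | ].
    by rewrite in_itv /= => /andP[x_gt0 xt]; exact: dh x x_gt0 (inT x xt).
  apply/continuous_within_itvP => //; split => //.
    by move=> x; rewrite in_itv /= => /andP[x_gt0 xt]; exact: h_cont x_gt0 (inT x xt).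
  exact/cvg_at_left_filter/h_cont.
by rewrite mul0r => /eqP; rewrite subr_eq0 => /eqP.
Qed.

End Interval.

Section AverageDifference.
Context {R : realType} {K : nat} {T : \bar R}.
Context {f g : 'I_K -> 'rV[R]_K -> R} {u : R -> 'rV[R]_K}.
Hypothesis K_gt0 : (0 < K)%N.
Hypothesis f_diff : forall j x, differentiable (f j) x.
Hypothesis u_der : forall t, 0 < t -> (t%:E < T)%E -> derivable u t 1.
Hypothesis jac_sum_neq0 : forall t, 0 < t -> (t%:E < T)%E ->
  \sum_(j < K) \sum_(k < K) pderiv (f j) k (u t) != 0.

Lemma is_derive_sum_f_shift {t c} : 0 < t -> (t%:E < T)%E ->
  (forall k, ('D_1 u t) 0 k + g k (u t) = dinvFD (fun i => f i (u t)) k.+1 + c) ->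
  is_derive t 1 (fun s => \sum_(j < K) f j (u s))
    ((c - Cd f g (u t)) * \sum_(j < K) \sum_(k < K) pderiv (f j) k (u t)).
Proof.
move=> t_gt0 tT eq_c.
have := is_derive_sum_comp_pderiv f u t (fun j => f_diff j (u t)) (u_der t t_gt0 tT).
by rewrite (double_sum_shift eq_c) mulrBl /Cd divfK ?jac_sum_neq0.
Qed.

Lemma adm_dinvFD_Cd :
  (forall t, 0 < t -> (t%:E < T)%E -> forall k : 'I_K,
     fdiff (fun i => ('D_1 u t) 0 i + g i (u t)) k.+1
     = favg (fun i => f i (u t)) k.+1) ->
  forall t, 0 < t -> (t%:E < T)%E -> forall k : 'I_K,
    ('D_1 u t) 0 k + g k (u t) = dinvFD (fun i => f i (u t)) k.+1 + Cd f g (u t).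
Proof.
move=> adm t t_gt0 tT.
have [_ [c eq_c]] := (fdiff_favg_dinvFDP K_gt0 _ _).1 (adm t t_gt0 tT).
suff <- : c = Cd f g (u t) by [].
have sum_f0 : \forall s \near t, 0 = \sum_(j < K) f j (u s).
  have := near_pos_lt_ereal T t_gt0 tT; apply: filterS => s [s_gt0 sT].
  by have [->] := (fdiff_favg_dinvFDP K_gt0 _ _).1 (adm s s_gt0 sT).
have [_ derive_shift] := is_derive_sum_f_shift t_gt0 tT eq_c.
have [_ derive0] := near_eq_is_derive sum_f0 (is_derive_cst 0 t 1).
move: derive_shift; rewrite derive0 => /esym/eqP.
by rewrite mulf_eq0 (negbTE (jac_sum_neq0 t t_gt0 tT)) orbF subr_eq0 => /eqP.
Qed.

Lemma dinvFD_Cd_adm :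
  \sum_(k < K) f k (u 0) = 0 -> u x @[x --> 0^'+] --> u 0 ->
  (forall t, 0 < t -> (t%:E < T)%E -> forall k : 'I_K,
    ('D_1 u t) 0 k + g k (u t) = dinvFD (fun i => f i (u t)) k.+1 + Cd f g (u t)) ->
  forall t, 0 < t -> (t%:E < T)%E -> forall k : 'I_K,
     fdiff (fun i => ('D_1 u t) 0 i + g i (u t)) k.+1
     = favg (fun i => f i (u t)) k.+1.
Proof.
move=> sum_f0 u_cvg0 eq_Cd t t_gt0 tT.
pose sum_fu s := \sum_(j < K) f j (u s).
have sum_fu_cst : sum_fu t = sum_fu 0.
  apply: (is_derive0_right_cst T) => // [s s_gt0 sT | ].
    have := is_derive_sum_f_shift s_gt0 sT (eq_Cd s s_gt0 sT).
    by rewrite subrr mul0r.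
  have sum_f_cont : continuous (\sum_(j < K) f j).
    by move=> x; apply/differentiable_continuous/differentiable_sum => j.
  by rewrite fct_sumE in sum_f_cont; exact: cvg_comp u_cvg0 (sum_f_cont _).
apply: (fdiff_favg_dinvFDP K_gt0 _ _).2; split; first by move: sum_fu_cst; rewrite /sum_fu sum_f0.
by exists (Cd f g (u t)); exact: eq_Cd.
Qed.

End AverageDifference.

Theorem mainTheorem6 (R : realType) (K : nat) (T : \bar R)
    (f g : 'I_K -> 'rV[R]_K -> R) (u : R -> 'rV[R]_K) :
  (0 < K)%N ->
  (forall (j : 'I_K) (x : 'rV[R]_K), differentiable (f j) x) ->
  (forall (j : 'I_K) (x : 'rV[R]_K), differentiable (g j) x) ->
  \sum_(k < K) f k (u 0) = 0 ->
  u x @[x --> 0^'+] --> u 0 ->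
  (forall t : R, 0 < t -> (t%:E < T)%E -> derivable u t 1) ->
  (forall t : R, 0 < t -> (t%:E < T)%E ->
     \sum_(j < K) \sum_(k < K) pderiv (f j) k (u t) != 0) ->
  (forall t : R, 0 < t -> (t%:E < T)%E -> forall k : 'I_K,
     fdiff (fun i : 'I_K => ('D_1 u t) 0 i + g i (u t)) k.+1
     = favg (fun i : 'I_K => f i (u t)) k.+1)
  <->
  (forall t : R, 0 < t -> (t%:E < T)%E -> forall k : 'I_K,
     ('D_1 u t) 0 k + g k (u t)
     = dinvFD (fun i : 'I_K => f i (u t)) k.+1 + Cd f g (u t)).
Proof.
(* [g] enters only through its values, so its differentiability is not needed. *)
move=> K_gt0 f_diff _ sum_f0 u_cvg0 u_der jac_sum_neq0.
split; first exact: (adm_dinvFD_Cd K_gt0 f_diff u_der jac_sum_neq0).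
exact: (dinvFD_Cd_adm K_gt0 f_diff u_der jac_sum_neq0 sum_f0 u_cvg0).
Qed.
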